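(* There is an SOS refutation of $Q_n$ of degree $2$ and monomial-size polynomial in $n$.
   Context: For $i\in[n]$, $j\in[2n]$ there are twin variable pairs $x_{ij},\bar x_{ij}$; $\mathrm{ks}_i=\sum_{j\in[2n]}x_{ij}-n$. $Q_n$ consists of: $\mathrm{ks}_1-1/2=0$; $\mathrm{ks}_i^2-\mathrm{ks}_{i+1}=0$ for $i\in[n-1]$; $\mathrm{ks}_n^2=0$. An SOS refutation of $Q$ is an identity $-1=\sum_i r_i^2+\sum_{q\in Q}t_q q+\sum(u(x^2-x)+v(x+\bar x-1))$ over twin pairs, with real polynomials; its degree is the maximum degree of the terms $r_i^2$, $t_q q$, $u(x^2-x)$, $v(x+\bar x-1)$; its monomial-size is the number of explicit monomials counted with multiplicity, where explicit monomials are all monomials appearing in the $r_i$, $t_q$, $q$, $u$, $v$, and the logical axioms. *)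

From HB Require Import structures.
From mathcomp Require Import all_boot all_order all_algebra.
From mathcomp Require Import mpoly.
From mathcomp Require Import Rstruct.
From Stdlib Require Rdefinitions.

Set Implicit Arguments.
Unset Strict Implicit.
Unset Printing Implicit Defensive.
Import Order.TTheory GRing.Theory Num.Theory.
Local Open Scope ring_scope.

(* Variables of Q_n: for i in [n], j in [2n], b = false gives x_ij, b = true gives
   its twin xbar_ij.  (Indices are 0-based: i : 'I_n, j : 'I_(2n).) *)
Definition var (n : nat) : finType := ('I_n * 'I_(n.*2) * bool)%type.
Definition nvars (n : nat) : nat := #|var n|.
Notation poly n := {mpoly Rdefinitions.R[nvars n]}.

Definition X (n : nat) (z : var n) : poly n := 'X_(enum_rank z).

(* x_{i,j} (0-based i); the fallback 0 for i >= n is never used below. *)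
Definition xv (n : nat) (i : nat) (j : 'I_(n.*2)) : poly n :=
  match (insub i : option 'I_n) with
  | Some i' => X (i', j, false)
  | None => 0
  end.

(* ks_{i+1} = sum_{j in [2n]} x_{i+1,j} - n   (0-based index i) *)
Definition ks (n : nat) (i : nat) : poly n := \sum_(j < n.*2) xv i j - n%:R.

(* The equations of Q_n, indexed by k : 'I_(n.+1):
   k = 0          : ks_1 - 1/2
   1 <= k <= n-1  : ks_k^2 - ks_{k+1}
   k = n          : ks_n^2                                   *)
Definition Qn (n : nat) (k : 'I_n.+1) : poly n :=
  if val k == 0%N then ks n 0 - (2%:R)^-1%:MP
  else if ltn (val k) n then ks n k.-1 ^+ 2 - ks n k
  else ks n n.-1 ^+ 2.

(* total degree of a polynomial (0 for the zero polynomial) *)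
Definition totdeg (n : nat) (p : poly n) : nat := (\max_(m <- msupp p) mdeg m)%N.

Definition nmon (n : nat) (p : poly n) : nat := size (msupp p).

Definition bool_ax (n : nat) (z : var n) : poly n := X z ^+ 2 - X z.
Definition twin_ax (n : nat) (p : 'I_n * 'I_(n.*2)) : poly n :=
  X (p.1, p.2, false) + X (p.1, p.2, true) - 1.

Record sos_ref (n : nat) := SosRef {
  rs : seq (poly n);
  tq : 'I_n.+1 -> poly n;
  uz : var n -> poly n;
  vp : 'I_n * 'I_(n.*2) -> poly n
}.

Definition is_refutation (n : nat) (P : sos_ref n) : Prop :=
  - 1 = \sum_(r <- rs P) r ^+ 2
        + \sum_(k : 'I_n.+1) tq P k * Qn k
        + \sum_(z : var n) uz P z * bool_ax z
        + \sum_(p : 'I_n * 'I_(n.*2)) vp P p * twin_ax p.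

Definition sos_degree (n : nat) (P : sos_ref n) : nat :=
  (maxn (\max_(r <- rs P) totdeg (r ^+ 2)%R)
  (maxn (\max_(k : 'I_n.+1) totdeg (tq P k * Qn k)%R)
  (maxn (\max_(z : var n) totdeg (uz P z * bool_ax z)%R)
        (\max_(p : 'I_n * 'I_(n.*2)) totdeg (vp P p * twin_ax p)%R))))%N.

(* monomial-size: monomials of every r_i, and for every axiom actually used
   (nonzero multiplier) the monomials of the multiplier and of the axiom. *)
Definition used (n : nat) (m : poly n) (s : nat) : nat := if m == 0 then 0%N else s.

Definition sos_msize (n : nat) (P : sos_ref n) : nat :=
  (\sum_(r <- rs P) nmon r
   + \sum_(k : 'I_n.+1) used (tq P k) (nmon (tq P k) + nmon (Qn k))
   + \sum_(z : var n) used (uz P z) (nmon (uz P z) + nmon (bool_ax z))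
   + \sum_(p : 'I_n * 'I_(n.*2))
        used (vp P p) (nmon (vp P p) + nmon (twin_ax p)))%N.

From mathcomp Require Import all_boot all_order all_algebra.
From mathcomp Require Import mpoly.
From mathcomp Require Import Rstruct ring zify.
From Stdlib Require Rdefinitions.
Set Implicit Arguments.
Unset Strict Implicit.
Unset Printing Implicit Defensive.
Import Order.TTheory GRing.Theory Num.Theory.
Local Open Scope ring_scope.

(* Write y_i = ks_(i+1) and a_i = 2^(-2^i), so that a_0 = 1/2 and a_(i+1) = a_i^2:
   the a_i are the values forced on the y_i by all equations of Q_n but the last.
   For weights W_i with W_i = 2 W_(i+1) a_(i+1) the expression
      sum_i W_i (y_i - a_i)^2 - sum_i W_i (y_i^2 - y_(i+1))     (y_n read as 0)
   telescopes to the constant sum_i W_i a_i^2 minus 2 W_0 a_0 y_0 (sos_telescope).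
   Taking W_i = 2^(n+1) 2^(-(i+2)) / a_i^2, the constant is 2^n - 1 and
   2 W_0 a_0 = 2^(n+1), so adding 2^(n+1) (y_0 - 1/2) yields -1.  Hence -1 is the
   sum of the squares (sqrt W_i (y_i - a_i))^2, of 2^(n+1) times the first equation
   and of -W_i times the other equations; no Boolean or twin axiom is needed. *)

Local Notation R := Rdefinitions.R.

Section MonomialCount.
Variables (k : nat) (S : nzRingType).
Implicit Types p q : {mpoly S[k]}.

Lemma size_msuppD p q : (size (msupp (p + q)) <= size (msupp p) + size (msupp q))%N.
Proof.
rewrite -size_cat; apply: uniq_leq_size; [exact: msupp_uniq | exact: msuppD_le].
Qed.

Lemma size_msuppN p : size (msupp (- p)) = size (msupp p).
Proof. exact: perm_size (msuppN p). Qed.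

Lemma size_msuppB p q : (size (msupp (p - q)) <= size (msupp p) + size (msupp q))%N.
Proof. by rewrite -(size_msuppN q) size_msuppD. Qed.

Lemma size_msuppM p q : (size (msupp (p * q)) <= size (msupp p) * size (msupp q))%N.
Proof.
rewrite -(size_allpairs (fun m1 m2 => (m1 + m2)%MM)).
apply: uniq_leq_size; [exact: msupp_uniq | exact: msuppM_le].
Qed.

Lemma size_msuppC (c : S) : (size (msupp (c%:MP : {mpoly S[k]})) <= 1)%N.
Proof. by rewrite msuppC; case: (c == 0). Qed.

Lemma size_msupp_sum m (F : 'I_m -> {mpoly S[k]}) :
  (size (msupp (\sum_(j < m) F j)) <= \sum_(j < m) size (msupp (F j)))%N.
Proof.
elim/big_rec2: _ => [|j s p _ IH]; first by rewrite msupp0.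
exact: leq_trans (size_msuppD _ _) (leq_add (leqnn _) IH).
Qed.

Lemma msizeC_le (c : S) : (msize (c%:MP : {mpoly S[k]}) <= 1)%N.
Proof. by rewrite msizeC; case: (_ != 0). Qed.

End MonomialCount.

(* Over an integral domain total degrees add up under products; stated for msize
   (= total degree + 1) as an upper bound, this yields all degree bounds below. *)
Lemma msizeM_le_of (k : nat) (S : idomainType) (p q : {mpoly S[k]}) a b :
  (msize p <= a)%N -> (msize q <= b)%N -> (msize (p * q) <= (a + b).-1)%N.
Proof.
have [->|nzp] := eqVneq p 0; first by rewrite mul0r msize0.
have [->|nzq] := eqVneq q 0; first by rewrite mulr0 msize0.
by rewrite msizeM //; lia.
Qed.


Section KnapsackForms.
Variable n : nat.
Implicit Types p : {mpoly R[nvars n]}.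

Lemma totdegE p : totdeg p = (msize p).-1.
Proof.
rewrite /totdeg msizeE; elim: (msupp p) => [|m s IH]; first by rewrite !big_nil.
rewrite !big_cons IH; case: (\max_(m0 <- s) (mdeg m0).+1)%N => [|d] /=.
  by rewrite !maxn0.
by rewrite maxnSS.
Qed.

Lemma totdeg_le p d : (msize p <= d.+1)%N -> (totdeg p <= d)%N.
Proof. by rewrite totdegE; case: (msize p). Qed.

Lemma xv_lt i (lt_i_n : (i < n)%N) (j : 'I_(n.*2)) :
  xv i j = X (Ordinal lt_i_n, j, false).
Proof. by rewrite /xv insubT. Qed.

Lemma nmon_ks i : (nmon (ks n i) <= n.*2.+1)%N.
Proof.
have nmon_xv (j : 'I_(n.*2)) : (nmon (xv i j) <= 1)%N.
  by rewrite /xv /nmon; case: insub => [i'|]; rewrite ?msuppX ?msupp0.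
rewrite /nmon /ks -addn1; apply: leq_trans (size_msuppB _ _) _; apply: leq_add.
  apply: leq_trans (size_msupp_sum _) _.
  rewrite -[leqRHS](card_ord (n.*2)) -sum1_card.
  by apply: leq_sum => j _; exact: nmon_xv.
by rewrite -(rmorph_nat (@mpolyC (nvars n) R)) size_msuppC.
Qed.

Lemma msize_ks i : (msize (ks n i) <= 2)%N.
Proof.
have msize_xv (j : 'I_(n.*2)) : (msize (xv i j) <= 2)%N.
  by rewrite /xv; case: insub => [i'|]; rewrite ?msize0 // /X msizeX mdeg1.
rewrite /ks; apply: leq_trans (msizeD_le _ _) _; rewrite geq_max msizeN.
apply/andP; split; last first.
  by rewrite -(rmorph_nat (@mpolyC (nvars n) R)) (leq_trans (msizeC_le _ _)).
by apply: leq_trans (msize_sum _ _ _) _; apply/bigmax_leqP => j _; exact: msize_xv.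
Qed.

(* For i < n the variable x_(i,0) occurs in ks_i with coefficient 1. *)
Lemma msize_ks_lt i : (i < n)%N -> msize (ks n i) = 2%N.
Proof.
move=> lt_i_n; apply/anti_leq; rewrite msize_ks /=.
have j0 : 'I_(n.*2) by exists 0%N; rewrite double_gt0 (leq_ltn_trans _ lt_i_n).
set m := U_(enum_rank ((Ordinal lt_i_n, j0, false) : var n))%MM.
have coef_m : (ks n i)@_m = 1.
  rewrite /ks mcoeffB raddf_sum -(rmorph_nat (@mpolyC (nvars n) R)) mcoeffC.
  rewrite [m == 0%MM](negbTE _) ?mulr0 ?subr0; last by rewrite -mdeg_eq0 mdeg1.
  rewrite (bigD1 j0) //= big1 ?addr0; first by rewrite xv_lt /X mcoeffXU eqxx.
  move=> j ne_j; rewrite xv_lt /X mcoeffXU (inj_eq enum_rank_inj).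
  by rewrite !xpair_eqE eqxx andbT /= (negbTE ne_j).
have m_supp : m \in msupp (ks n i).
  by rewrite -[_ \in _]negbK -mcoeff_eq0 coef_m oner_eq0.
by have := msize_mdeg_lt m_supp; rewrite mdeg1.
Qed.

End KnapsackForms.

(* With W_i = 2 W_(i+1) A_(i+1) the cross term W_i y_(i+1) of the i-th summand
   cancels the linear term -2 W_(i+1) A_(i+1) y_(i+1) of the next square. *)
Section Telescope.
Variable S : comPzRingType.

Lemma sos_telescope m (y W A : nat -> S) :
  (forall i, (i < m)%N -> W i = 2 * W i.+1 * A i.+1) ->
  \sum_(0 <= i < m.+1) W i * (y i - A i) ^+ 2
  - \sum_(0 <= i < m.+1) W i * (y i ^+ 2 - (if (i < m)%N then y i.+1 else 0))
  = \sum_(0 <= i < m.+1) W i * A i ^+ 2 - 2 * W 0 * A 0 * y 0.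
Proof.
elim: m y W A => [|m IH] y W A HW; first by rewrite !big_nat1 /=; ring.
rewrite !(big_nat_recl _ _ _ (leq0n m.+1)) /=.
have HW' i : (i < m)%N -> W i.+1 = 2 * W i.+2 * A i.+2 by move=> ?; apply: HW.
have /eqP := IH (fun i => y i.+1) (fun i => W i.+1) (fun i => A i.+1) HW'.
rewrite subr_eq => /eqP /= ->.
have -> : W 0%N = 2 * W 1%N * A 1%N by apply: HW.
ring.
Qed.

Lemma telescope_refutation m (y W A : nat -> S) (M h : S) :
  (forall i, (i < m)%N -> W i = 2 * W i.+1 * A i.+1) ->
  2 * W 0 * A 0 = M -> M * h = \sum_(0 <= i < m.+1) W i * A i ^+ 2 + 1 ->
  -1 = \sum_(0 <= i < m.+1) W i * (y i - A i) ^+ 2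
       + (M * (y 0 - h) + \sum_(0 <= i < m.+1)
            - W i * (y i ^+ 2 - (if (i < m)%N then y i.+1 else 0))).
Proof.
move=> HW HM Hh; have T := sos_telescope y HW.
under [X in M * _ + X]eq_bigr do rewrite mulNr.
rewrite sumrN mulrBr Hh -HM.
set S1 := \sum_(0 <= i < m.+1) _ * (_ - _) ^+ 2 in T *.
set S2 := \sum_(0 <= i < m.+1) _ * (_ - _) in T *.
by rewrite -(subrK S2 S1) T; ring.
Qed.

End Telescope.

Local Notation half := (2%:R^-1 : R).

Definition acoef (i : nat) : R := half ^+ (2 ^ i).

Lemma acoefS i : acoef i.+1 = acoef i ^+ 2.
Proof. by rewrite /acoef expnS mulnC exprM. Qed.

Lemma acoef_gt0 i : 0 < acoef i.
Proof. by rewrite exprn_gt0 // invr_gt0 ltr0n. Qed.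

Definition weight (n i : nat) : R := 2%:R ^+ n.+1 * half ^+ i.+2 / acoef i ^+ 2.

Lemma weight_gt0 n i : 0 < weight n i.
Proof.
have two_gt0 : (0 : R) < 2%:R by rewrite ltr0n.
apply: divr_gt0; last exact: exprn_gt0 (acoef_gt0 i).
by apply: mulr_gt0; apply: exprn_gt0; rewrite ?invr_gt0.
Qed.

Lemma weight_rec n i : weight n i = 2 * weight n i.+1 * acoef i.+1.
Proof.
rewrite /weight acoefS [half ^+ i.+3]exprS.
move: (2%:R ^+ n.+1) (half ^+ i.+2) (acoef i) (lt0r_neq0 (acoef_gt0 i)) => M h a nz_a.
by field.
Qed.

Lemma weight_acoef n i : weight n i * acoef i ^+ 2 = 2%:R ^+ n.+1 * half ^+ i.+2.
Proof. by rewrite /weight divfK // expf_neq0 // lt0r_neq0 ?acoef_gt0. Qed.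

Lemma sum_half m : \sum_(0 <= i < m) half ^+ i.+2 = half - half ^+ m.+1.
Proof.
elim: m => [|m IH]; first by rewrite big_nil expr1 subrr.
by rewrite big_nat_recr //= IH !exprS; field.
Qed.

(* The count of monomials below, n (2n + 2) + (n + 1) (1 + (2n + 2)^2), is cubic in n. *)
Lemma monomial_count_cubic m :
  (m.+1 * (m.+1).*2.+2 + m.+2 * (1 + (m.+1).*2.+2 ^ 2) <= 100 * m.+1 ^ 3)%N.
Proof. nia. Qed.

Section Refutation.
Variable m : nat.
Local Notation n := m.+1.
Local Notation P := {mpoly R[nvars n]}.

Definition scaled_sq (i : nat) : P :=
  (Num.sqrt (weight n i))%:MP * (ks n i - (acoef i)%:MP).

Definition eq_mult (k : 'I_n.+1) : P :=
  if val k == 0%N then (2%:R ^+ n.+1)%:MP else - (weight n k.-1)%:MP.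

Definition refutation : sos_ref n :=
  SosRef [seq scaled_sq i | i <- iota 0 n] eq_mult (fun _ => 0) (fun _ => 0).

(* The term subtracted in the equation ks_i^2 - ks_(i+1) of Q_n (0-based indices as
   in Qn), read as 0 in the last equation ks_(n-1)^2. *)
Definition next_ks (i : nat) : P := if (i < m)%N then ks n i.+1 else 0.

Lemma scaled_sq2 i : scaled_sq i ^+ 2 = (weight n i)%:MP * (ks n i - (acoef i)%:MP) ^+ 2.
Proof. by rewrite /scaled_sq exprMn -rmorphXn sqr_sqrtr // ltW ?weight_gt0. Qed.

Lemma eq_mult_lift (i : 'I_n) : eq_mult (lift ord0 i) * Qn (lift ord0 i)
  = - (weight n i)%:MP * (ks n i ^+ 2 - next_ks i).
Proof.
rewrite /eq_mult /Qn /next_ks /= /bump /= add1n /= ltnS.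
case: ltnP => [//|le_m_i]; have -> : i = m :> nat by have := ltn_ord i; lia.
by rewrite subr0.
Qed.

Lemma refutation_correct : is_refutation refutation.
Proof.
rewrite /is_refutation [X in _ + X]big1 ?addr0; last by move=> *; rewrite mul0r.
rewrite [X in _ + X]big1 ?addr0; last by move=> *; rewrite mul0r.
rewrite big_map (_ : iota 0 n = index_iota 0 n) ?subn0 //.
under eq_bigr do rewrite scaled_sq2.
rewrite big_ord_recl (eq_bigr _ (fun i _ => eq_mult_lift i)).
rewrite -(big_mkord xpredT (fun i => - (weight n i)%:MP * (ks n i ^+ 2 - next_ks i))).
rewrite /eq_mult /Qn /next_ks /=.
apply: telescope_refutation.
- move=> i _; rewrite -(rmorph_nat (@mpolyC (nvars n) R)) -!rmorphM /=.
  by rewrite -weight_rec.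
- rewrite -(rmorph_nat (@mpolyC (nvars n) R)) -!rmorphM /= /weight /acoef /=.
  by congr (_%:MP); field.
- under eq_bigr do rewrite -rmorphXn -rmorphM weight_acoef.
  rewrite -rmorphM -rmorph_sum -(rmorph1 (@mpolyC (nvars n) R)) -rmorphD /=.
  congr (_%:MP); rewrite -mulr_sumr sum_half mulrBr -exprMn.
  by rewrite mulfV ?pnatr_eq0 // expr1n subrK.
Qed.

Lemma msize_ksC i (c : R) : (msize (ks n i - c%:MP) <= 2)%N.
Proof.
apply: leq_trans (msizeD_le _ _) _.
by rewrite geq_max msizeN msize_ks (leq_trans (msizeC_le _ _)).
Qed.

Lemma msize_eq_mult k : (msize (eq_mult k) <= 1)%N.
Proof. by rewrite /eq_mult; case: ifP => _; rewrite ?msizeN msizeC_le. Qed.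

Lemma msize_Qn k : (msize (Qn k : P) <= 3)%N.
Proof.
have msize_sq i : (msize (ks n i ^+ 2) <= 3)%N.
  by rewrite expr2 (msizeM_le_of (msize_ks _ _) (msize_ks _ _)).
rewrite /Qn; case: ifP => _; first exact: leq_trans (msize_ksC _ _) _.
case: ifP => _ //; apply: leq_trans (msizeD_le _ _) _.
by rewrite geq_max msizeN msize_sq (leq_trans (msize_ks _ _)).
Qed.

Lemma msize_last_term : msize (eq_mult ord_max * Qn ord_max) = 3%N.
Proof.
rewrite /eq_mult /Qn /= ltnn.
have nz_w : weight n m != 0 by rewrite lt0r_neq0 ?weight_gt0.
have nz_wP : - (weight n m)%:MP != 0 :> P by rewrite oppr_eq0 mpolyC_eq0.
have ks2 := msize_ks_lt (ltnSn m).
have nz_ks : ks n m != 0 by rewrite -msize_poly_eq0 ks2.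
by rewrite expr2 !msizeM ?mulf_neq0 // ks2 msizeN msizeC nz_w.
Qed.

Lemma refutation_degree : sos_degree refutation = 2%N.
Proof.
have no_axioms (T : finType) (f : T -> P) : (\max_(z : T) totdeg (0 * f z) = 0)%N.
  by apply: big1 => z _; rewrite mul0r totdegE msize0.
rewrite /sos_degree !no_axioms !maxn0.
apply/anti_leq; rewrite !geq_max; apply/andP; split; first (apply/andP; split).
- apply/bigmax_leqP_seq => _ /mapP[i _ ->] _; apply: totdeg_le; rewrite expr2.
  have sq_size : (msize (scaled_sq i) <= 2)%N := msizeM_le_of (msizeC_le _ _) (msize_ksC _ _).
  exact: (msizeM_le_of sq_size sq_size).
- apply/bigmax_leqP => k _; apply: totdeg_le.
  exact: msizeM_le_of (msize_eq_mult k) (msize_Qn k).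
- apply: leq_trans (leq_maxr _ _); apply: leq_trans (leq_bigmax ord_max).
  by rewrite totdegE msize_last_term.
Qed.

Lemma nmon_ksC i (c : R) : (nmon (ks n i - c%:MP : P) <= n.*2.+2)%N.
Proof.
rewrite /nmon; apply: leq_trans (size_msuppB _ _) _.
by apply: leq_trans (leq_add (nmon_ks n i) (size_msuppC _ c)) _; rewrite addn1.
Qed.

Lemma nmon_Qn k : (nmon (Qn k : P) <= n.*2.+2 ^ 2)%N.
Proof.
have nmon_ks2 i : (nmon (ks n i ^+ 2 : P) <= n.*2.+1 ^ 2)%N.
  rewrite expr2 expnS expn1 /nmon; apply: leq_trans (size_msuppM _ _) _.
  exact: leq_mul (nmon_ks n i) (nmon_ks n i).
have sq_mono : (n.*2.+1 ^ 2 <= n.*2.+2 ^ 2)%N by move: (n.*2) => d; nia.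
rewrite /Qn; case: ifP => _.
  by apply: leq_trans (nmon_ksC 0 _) _; move: (n.*2) => d; nia.
case: ifP => _; last exact: leq_trans (nmon_ks2 _) sq_mono.
rewrite /nmon; apply: leq_trans (size_msuppB _ _) _.
apply: leq_trans (leq_add (nmon_ks2 k.-1) (nmon_ks n k)) _.
by move: (n.*2) => d; nia.
Qed.

Lemma refutation_msize : (sos_msize refutation <= 100 * n ^ 3)%N.
Proof.
have used_le (p : P) s : (used p s <= s)%N by rewrite /used; case: ifP.
have no_axioms (T : finType) (s : T -> nat) : (\sum_(z : T) used (0 : P) (s z) = 0)%N.
  by apply: big1 => z _; rewrite /used eqxx.
have squares : (\sum_(r <- rs refutation) nmon r <= n * n.*2.+2)%N.
  rewrite big_map (_ : iota 0 n = index_iota 0 n) ?subn0 //.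
  apply: (@leq_trans (\sum_(0 <= i < n) n.*2.+2)%N); last by rewrite sum_nat_const_nat subn0.
  apply: leq_sum => i _; rewrite /nmon /scaled_sq.
  apply: leq_trans (size_msuppM _ _) _; rewrite -[leqRHS]mul1n.
  exact: leq_mul (size_msuppC _ _) (nmon_ksC i _).
have equations : (\sum_(k < n.+1) used (eq_mult k) (nmon (eq_mult k) + nmon (Qn k : P))
    <= n.+1 * (1 + n.*2.+2 ^ 2))%N.
  rewrite -[n.+1 in leqRHS]card_ord -sum_nat_const; apply: leq_sum => k _.
  apply: leq_trans (used_le _ _) (leq_add _ (nmon_Qn k)).
  by rewrite /eq_mult /nmon; case: ifP => _; rewrite ?size_msuppN size_msuppC.
rewrite /sos_msize !no_axioms !addn0.
exact: leq_trans (leq_add squares equations) (monomial_count_cubic m).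
Qed.

End Refutation.

Theorem lemma6 :
  exists c k : nat, forall n : nat, (0 < n)%N ->
    exists P : sos_ref n,
      is_refutation P /\ sos_degree P = 2%N /\ (sos_msize P <= c * n ^ k)%N.
Proof.
exists 100%N, 3%N; case => [//|m] _.
exists (refutation m).
split; [exact: refutation_correct | split; [exact: refutation_degree | exact: refutation_msize]].
Qed.
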